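(* Let $\rho_A,\rho_B,\rho_O,\rho_T>0$, $\boldsymbol\alpha\in\mathbb R^c$, $\boldsymbol v_1\in\mathbb R^d$. Let $\mathcal Z=\{\boldsymbol z_x\}_{x\in[c]}\in(\mathbb R^d)^c$ and define $\mathcal Z'=\{\boldsymbol z'_x\}_{x\in[c]}$ by $$\boldsymbol z'_x=\rho_A\boldsymbol z_x+\frac{\rho_B}{d_x}\sum_{y\in[c]}w_{x,y}\boldsymbol z_y+\rho_O\sum_{y\in[c]}\alpha_y\boldsymbol z_y+\rho_T\boldsymbol v_1.$$ Let $\boldsymbol Z\in\mathbb R^{d\times c}$ and $\boldsymbol Z'\in\mathbb R^{d\times c}$ be the matrices with columns $\boldsymbol z_x$ and $\boldsymbol z'_x$. Let $\boldsymbol M=\rho_A\boldsymbol I+\rho_B\boldsymbol D^{-1/2}\boldsymbol W\boldsymbol D^{-1/2}$ with eigenvalues $\lambda_1,\dots,\lambda_c$ arranged in non-increasing order of absolute value, and eigen-decomposition $$\boldsymbol M=\begin{bmatrix}\boldsymbol f&\boldsymbol X&\boldsymbol Y\end{bmatrix}\begin{bmatrix}\lambda_1&&\\&\boldsymbol\Lambda&\\&&\boldsymbol\Lambda'\end{bmatrix}\begin{bmatrix}\boldsymbol f^\top\\\boldsymbol X^\top\\\boldsymbol Y^\top\end{bmatrix},$$ with orthonormal eigenvectors, $\boldsymbol\Lambda=\mathrm{diag}(\lambda_2,\dots,\lambda_q)$, $\boldsymbol\Lambda'=\mathrm{diag}(\lambda_{q+1},\dots,\lambda_c)$ for some $2\le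 q<c$. Let $\delta_{\boldsymbol M}=|\lambda_q/\lambda_{q+1}|$. Then, provided $\lambda_{q+1}\neq0$, $\|\boldsymbol Z\boldsymbol D^{1/2}\boldsymbol X\|\neq0$ and $\|\boldsymbol Z\boldsymbol D^{1/2}\boldsymbol Y\|\ne0$, $$\frac{\|\boldsymbol Z'\boldsymbol D^{1/2}\boldsymbol X\|}{\|\boldsymbol Z\boldsymbol D^{1/2}\boldsymbol X\|}\ge\delta_{\boldsymbol M}\frac{\|\boldsymbol Z'\boldsymbol D^{1/2}\boldsymbol Y\|}{\|\boldsymbol Z\boldsymbol D^{1/2}\boldsymbol Y\|}.$$
   Context: $\mathcal G$ is a connected undirected graph on $[c]$ with (0/1) adjacency matrix $\widetilde{\boldsymbol W}$ and stationary distribution $\boldsymbol\pi$ of its random walk (all $\pi_x>0$). $\boldsymbol W=\{w_{x,y}\}$ with $w_{x,y}=\widetilde w_{x,y}\pi_x\pi_y$ is the reweighted adjacency matrix, $d_x=\sum_y w_{x,y}$, $\boldsymbol D=\mathrm{diag}(d_1,\dots,d_c)$. $\|\cdot\|$ denotes the Frobenius norm. *)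

From HB Require Import structures.
From mathcomp Require Import all_boot all_order all_algebra.
Set Implicit Arguments. Unset Strict Implicit. Unset Printing Implicit Defensive.
Import Order.TTheory GRing.Theory Num.Theory.
Local Open Scope ring_scope.

Section Defs.
Variable R : rcfType.

Definition connected_simple_graph (c : nat) (e : rel 'I_c) : Prop :=
  symmetric e /\ irreflexive e /\ (forall x y : 'I_c, connect e x y).

Definition adjmx (c : nat) (e : rel 'I_c) : 'M[R]_c := \matrix_(x, y) (e x y)%:R.

Definition rw_stationary (c : nat) (e : rel 'I_c) (pi : 'I_c -> R) : Prop :=
  (forall x, 0 <= pi x) /\ \sum_x pi x = 1 /\
  (forall y, pi y = \sum_x pi x * (adjmx e x y / \sum_z adjmx e x z)).

Definition rwW (c : nat) (e : rel 'I_c) (pi : 'I_c -> R) : 'M[R]_c :=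
  \matrix_(x, y) (adjmx e x y * pi x * pi y).

Definition degW (c : nat) (e : rel 'I_c) (pi : 'I_c -> R) (x : 'I_c) : R :=
  \sum_y rwW e pi x y.

Definition Dhalf (c : nat) (e : rel 'I_c) (pi : 'I_c -> R) : 'M[R]_c :=
  diag_mx (\row_x Num.sqrt (degW e pi x)).
Definition Dinvhalf (c : nat) (e : rel 'I_c) (pi : 'I_c -> R) : 'M[R]_c :=
  diag_mx (\row_x (Num.sqrt (degW e pi x))^-1).

Definition Mmat (c : nat) (e : rel 'I_c) (pi : 'I_c -> R) (rhoA rhoB : R) : 'M[R]_c :=
  rhoA%:M + rhoB *: (Dinvhalf e pi *m rwW e pi *m Dinvhalf e pi).

Definition Zprime (c n : nat) (e : rel 'I_c) (pi : 'I_c -> R)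
  (rhoA rhoB rhoO rhoT : R) (alpha : 'cV[R]_c) (v1 : 'cV[R]_n)
  (Z : 'M[R]_(n, c)) : 'M[R]_(n, c) :=
  \matrix_(i, x)
    (rhoA * Z i x
     + rhoB / degW e pi x * (\sum_y rwW e pi x y * Z i y)
     + rhoO * (\sum_y alpha y 0 * Z i y)
     + rhoT * v1 i 0).

Definition frob (m n : nat) (A : 'M[R]_(m, n)) : R :=
  Num.sqrt (\sum_i \sum_j A i j ^+ 2).

(* Diagonal matrix diag(lam 1, ..., lam k) from a 1-based eigenvalue list. *)
Definition diag_eigs (k : nat) (lam : nat -> R) : 'M[R]_k :=
  diag_mx (\row_(i < k) lam i.+1).

End Defs.

From HB Require Import structures.
From mathcomp Require Import all_boot all_order all_algebra ring lra zify.
Set Implicit Arguments. Unset Strict Implicit. Unset Printing Implicit Defensive.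
Import Order.TTheory GRing.Theory Num.Theory.
Local Open Scope ring_scope.

(* The vector s = D^{1/2} 1 is an eigenvector of M for rho_A + rho_B.  A maximum
   principle for h = D^{-1/2} v shows that every eigenvector v of M whose
   eigenvalue has modulus at least rho_A + rho_B is a multiple of s; as lambda_1
   dominates, f is parallel to s and the columns of X and Y are orthogonal to s.
   Since W is symmetric, Z' D^{1/2} = Z D^{1/2} M + u s^T for a vector u, so
   Z' D^{1/2} X = Z D^{1/2} X Lambda and Z' D^{1/2} Y = Z D^{1/2} Y Lambda'.  The
   entries of Lambda have modulus at least |lambda_q| and those of Lambda' at most
   |lambda_{q+1}|, which bounds the two ratios of Frobenius norms.  Neither the
   stationarity of pi nor the signs of rho_O and rho_T play any role. *)

Section Frobenius.
Variable R : rcfType.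

Lemma frob_scale m n (a : R) (A : 'M[R]_(m, n)) : frob (a *: A) = `|a| * frob A.
Proof.
rewrite /frob -sqrtr_sqr -sqrtrM ?sqr_ge0 // big_distrr; congr Num.sqrt.
by apply: eq_bigr => i _; rewrite big_distrr; apply: eq_bigr => j _; rewrite mxE exprMn.
Qed.

Lemma frob_mulmx_diag_mono m n (A : 'M[R]_(m, n)) (mu nu : 'rV[R]_n) :
  (forall j, `|mu 0 j| <= `|nu 0 j|) ->
  frob (A *m diag_mx mu) <= frob (A *m diag_mx nu).
Proof.
move=> le_mu_nu; apply: ler_wsqrtr; apply: ler_sum => i _; apply: ler_sum => j _.
rewrite !mul_mx_diag !mxE !exprMn ler_wpM2l ?sqr_ge0 //.
by rewrite -(real_normK (num_real (mu 0 j))) -(real_normK (num_real (nu 0 j))) ler_sqr ?nnegrE.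
Qed.

Lemma frob_mulmx_diag_ge m n (A : 'M[R]_(m, n)) (mu : 'rV[R]_n) (a : R) :
  (forall j, `|a| <= `|mu 0 j|) -> `|a| * frob A <= frob (A *m diag_mx mu).
Proof.
move=> le_a_mu; rewrite -frob_scale -mul_mx_scalar -diag_const_mx.
by apply: frob_mulmx_diag_mono => j; rewrite mxE.
Qed.

Lemma frob_mulmx_diag_le m n (A : 'M[R]_(m, n)) (mu : 'rV[R]_n) (a : R) :
  (forall j, `|mu 0 j| <= `|a|) -> frob (A *m diag_mx mu) <= `|a| * frob A.
Proof.
move=> le_mu_a; rewrite -frob_scale -mul_mx_scalar -diag_const_mx.
by apply: frob_mulmx_diag_mono => j; rewrite mxE.
Qed.

End Frobenius.

Lemma row_nat_split (R : Type) m n (F : nat -> R) :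
  \row_(i < m + n) F i = row_mx (\row_(i < m) F i) (\row_(j < n) F (m + j)%N).
Proof. by apply/matrixP => i j; rewrite !mxE; case: splitP => k ->; rewrite mxE. Qed.

Lemma eigcols_row_mx (R : pzRingType) c m n (M : 'M[R]_c) (A : 'M[R]_(c, m))
    (B : 'M[R]_(c, n)) (a : 'rV[R]_m) (b : 'rV[R]_n) :
  M *m row_mx A B = row_mx A B *m diag_mx (row_mx a b) ->
  M *m A = A *m diag_mx a /\ M *m B = B *m diag_mx b.
Proof.
by rewrite mul_mx_row diag_mx_row mul_row_block !mulmx0 addr0 add0r => /eq_row_mx.
Qed.

Section TopEigenvector.
Variables (R : rcfType) (c k : nat) (M : 'M[R]_c) (f : 'cV[R]_c) (Q : 'M[R]_(c, k)).
Variable lam : nat -> R.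
Hypothesis orthonormal : (row_mx f Q)^T *m row_mx f Q = 1%:M.
Hypothesis eigen_decomposition :
  M = row_mx f Q *m diag_eigs (1 + k) lam *m (row_mx f Q)^T.

Lemma eigbasis_trmx : M^T = M.
Proof.
by rewrite [in LHS]eigen_decomposition !trmx_mul trmxK tr_diag_mx mulmxA.
Qed.

Lemma eigbasis_blocks : f^T *m f = 1%:M /\ Q^T *m f = 0.
Proof.
move: orthonormal; rewrite tr_row_mx mul_col_row scalar_mx_block.
by case/eq_block_mx => -> _ -> _.
Qed.

Lemma eigbasis_mulmx :
  M *m f = lam 1%N *: f /\ M *m Q = Q *m diag_mx (\row_(j < k) lam j.+2).
Proof.
have : M *m row_mx f Q = row_mx f Q *m diag_eigs (1 + k) lam.
  by rewrite [in LHS]eigen_decomposition -mulmxA orthonormal mulmx1.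
rewrite /diag_eigs (row_nat_split 1 k (fun i => lam i.+1)) => /eigcols_row_mx [-> ->]; split=> //.
suff -> : \row_(i < 1) lam i.+1 = const_mx (lam 1%N) by rewrite diag_const_mx mul_mx_scalar.
by apply/matrixP => i j; rewrite !mxE ord1.
Qed.

Lemma eigbasis_coord_eigenvalue (s : 'cV[R]_c) (r : R) (j : 'I_k) :
  M *m s = r *: s -> (Q^T *m s) j 0 != 0 -> lam j.+2 = r.
Proof.
move=> Ms nz; apply: (mulIf nz).
have QtM : Q^T *m M = diag_mx (\row_(j < k) lam j.+2) *m Q^T.
  by rewrite -eigbasis_trmx -trmx_mul (proj2 eigbasis_mulmx) trmx_mul tr_diag_mx.
have := congr1 (fun A : 'cV[R]_k => A j 0) (congr1 (mulmx Q^T) Ms).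
by rewrite /= mulmxA QtM -mulmxA mul_diag_mx -scalemxAr !mxE mulrC => ->.
Qed.

Lemma eigbasis_perp_perron (s : 'cV[R]_c) (r : R) :
  0 <= r -> M *m s = r *: s ->
  (forall j : 'I_k, `|lam j.+2| <= `|lam 1%N|) ->
  (forall (v : 'cV[R]_c) mu, v != 0 -> M *m v = mu *: v -> r <= `|mu| ->
     exists a, v = a *: s) ->
  Q^T *m s = 0.
Proof.
move=> r_ge0 Ms top perron; apply/eqP/negPn/negP => /matrix0Pn[j [i]].
rewrite [i]ord1 => nz.
have [ftf Qtf] := eigbasis_blocks.
have f_neq0 : f != 0.
  apply/eqP => f0; move/matrixP/(_ 0 0): ftf.
  by rewrite f0 mulmx0 !mxE eqxx mulr1n => /eqP; rewrite eq_sym oner_eq0.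
have [a fa] : exists a, f = a *: s.
  apply: perron f_neq0 (proj1 eigbasis_mulmx) _.
  by rewrite -(ger0_norm r_ge0) -(eigbasis_coord_eigenvalue Ms nz).
have a_neq0 : a != 0 by apply: contra_neq f_neq0 => a0; rewrite fa a0 scale0r.
have : Q^T *m s = a^-1 *: (Q^T *m f) by rewrite fa -scalemxAr scalerA mulVf ?scale1r.
by rewrite Qtf scaler0 => Qts; rewrite Qts mxE eqxx in nz.
Qed.

End TopEigenvector.

Lemma cV_norm_argmax (R : realDomainType) n (h : 'cV[R]_n) :
  h != 0 -> exists x0, h x0 0 != 0 /\ forall y, `|h y 0| <= `|h x0 0|.
Proof.
case/matrix0Pn => i [j]; rewrite [j]ord1 => hi.
case: (@arg_maxP _ R 'I_n i xpredT (fun y => `|h y 0|) isT) => x0 _ max_x0.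
exists x0; split=> [|y]; last exact: max_x0.
by rewrite -normr_gt0 (lt_le_trans _ (max_x0 i isT)) ?normr_gt0.
Qed.

Section MaximumPrinciple.
Variables (R : realDomainType) (c : nat) (e : rel 'I_c) (W : 'M[R]_c).
Hypotheses (W_ge0 : forall x y, 0 <= W x y) (W_gt0 : forall x y, e x y -> 0 < W x y).
Variable g : 'I_c -> R.
Hypothesis g_harmonic : forall x, \sum_y W x y * g y = (\sum_y W x y) * g x.

Lemma harmonic_max_eq (m : R) :
  (forall y, g y <= m) -> forall x y, connect e x y -> g x = m -> g y = m.
Proof.
move=> g_le_m x _ /connectP[p e_p ->].
elim: p x e_p => //= y p IHp x /andP[exy e_p] gx; apply: IHp e_p _.
have : \sum_z W x z * (m - g z) == 0.
  by rewrite (eq_bigr _ (fun z _ => mulrBr _ _ _)) sumrB g_harmonic gx -big_distrl subrr.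
rewrite psumr_eq0 => [/allP/(_ y (mem_index_enum y))|z _]; last first.
  by rewrite mulr_ge0 ?subr_ge0.
by rewrite mulf_eq0 gt_eqF ?W_gt0 //= subr_eq0 => /eqP.
Qed.

End MaximumPrinciple.

Lemma harmonic_normmax_eq (R : realDomainType) c (e : rel 'I_c) (W : 'M[R]_c)
    (g : 'I_c -> R) (x0 : 'I_c) :
  (forall x y, 0 <= W x y) -> (forall x y, e x y -> 0 < W x y) ->
  (forall x, \sum_y W x y * g y = (\sum_y W x y) * g x) ->
  (forall y, connect e x0 y) -> (forall y, `|g y| <= `|g x0|) ->
  forall y, g y = g x0.
Proof.
move=> W_ge0 W_gt0; wlog g_x0 : g / 0 <= g x0 => [wlog_g|g_harm conn max_x0 y].
  case: (lerP 0 (g x0)) => [/wlog_g//|/ltW g_x0 g_harm conn max_x0 y]; apply: oppr_inj.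
  apply: (wlog_g (fun y => - g y)) => [|x|//|z]; rewrite ?oppr_ge0 ?normrN //.
  by rewrite (eq_bigr _ (fun z _ => mulrN _ _)) sumrN g_harm mulrN.
apply: (harmonic_max_eq W_ge0 W_gt0 g_harm _ (conn y) erefl) => z.
by rewrite -(ger0_norm g_x0) (le_trans (ler_norm _)).
Qed.

Lemma eq_of_norm_ge_dist_le (R : realDomainType) (a b z : R) :
  0 < a -> a + b <= `|z| -> `|z - a| <= b -> z = a + b.
Proof. by rewrite ler_normr ler_norml => ? /orP[] ? /andP[] ? ?; lra. Qed.

Lemma rwW_sym (R : rcfType) c (e : rel 'I_c) (pi : 'I_c -> R) :
  symmetric e -> forall x y, rwW e pi x y = rwW e pi y x.
Proof. by move=> e_sym x y; rewrite !mxE e_sym mulrAC. Qed.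

Lemma rwW_ge0 (R : rcfType) c (e : rel 'I_c) (pi : 'I_c -> R) :
  (forall x, 0 <= pi x) -> forall x y, 0 <= rwW e pi x y.
Proof. by move=> pi_ge0 x y; rewrite !mxE !mulr_ge0 ?ler0n. Qed.

Lemma rwW_gt0 (R : rcfType) c (e : rel 'I_c) (pi : 'I_c -> R) :
  (forall x, 0 < pi x) -> forall x y, e x y -> 0 < rwW e pi x y.
Proof. by move=> pi_gt0 x y exy; rewrite !mxE exy !mulr_gt0. Qed.

Lemma connected_has_neighbor c (e : rel 'I_c) :
  (1 < c)%N -> (forall x y, connect e x y) -> forall x, exists y, e x y.
Proof.
move=> c_gt1 e_conn x.
have [y neq_yx] : exists y : 'I_c, y != x.
  have [->|x_neq0] := eqVneq x (Ordinal (ltnW c_gt1)).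
    by exists (Ordinal c_gt1); apply/eqP => /(congr1 val).
  by exists (Ordinal (ltnW c_gt1)); rewrite eq_sym.
case/connectP: (e_conn x y) => [[|z p]] /=; first by move=> _ yx; rewrite yx eqxx in neq_yx.
by case/andP => exz _ _; exists z.
Qed.

Lemma degW_gt0 (R : rcfType) c (e : rel 'I_c) (pi : 'I_c -> R) :
  (forall x, 0 < pi x) -> (forall x, exists y, e x y) -> forall x, 0 < degW e pi x.
Proof.
move=> pi_gt0 e_nbr x; have [y exy] := e_nbr x.
rewrite /degW (bigD1 y) //= ltr_pwDl ?rwW_gt0 ?sumr_ge0 // => z _.
by apply: rwW_ge0 => t; apply: ltW.
Qed.

Definition sqrt_degW (R : rcfType) c (e : rel 'I_c) (pi : 'I_c -> R) : 'cV[R]_c :=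
  \col_x Num.sqrt (degW e pi x).

Section NormalizedAdjacency.
Variables (R : rcfType) (c : nat) (e : rel 'I_c) (pi : 'I_c -> R) (rhoA rhoB : R).
Hypotheses (pi_gt0 : forall x, 0 < pi x) (deg_gt0 : forall x, 0 < degW e pi x).
Hypotheses (e_sym : symmetric e) (e_conn : forall x y, connect e x y).
Hypotheses (rhoA_gt0 : 0 < rhoA) (rhoB_gt0 : 0 < rhoB).

Local Notation W := (rwW e pi).
Local Notation d := (degW e pi).
Local Notation M := (Mmat e pi rhoA rhoB).
Local Notation s := (sqrt_degW e pi).

Let W_ge0 x y : 0 <= W x y. Proof. by apply: rwW_ge0 => z; apply: ltW. Qed.

Lemma sqrt_degW_neq0 x : Num.sqrt (d x) != 0.
Proof. by rewrite gt_eqF ?sqrtr_gt0. Qed.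

Lemma Dhalf_Dinvhalf : Dhalf e pi *m Dinvhalf e pi = 1%:M.
Proof.
rewrite mulmx_diag -diag_const_mx; congr diag_mx.
by apply/matrixP => i x; rewrite !mxE divff ?sqrt_degW_neq0.
Qed.

Lemma Mmat_mulmx (v : 'cV[R]_c) :
  M *m v = rhoA *: v + rhoB *: (Dinvhalf e pi *m (W *m (Dinvhalf e pi *m v))).
Proof. by rewrite mulmxDl mul_scalar_mx -scalemxAl !mulmxA. Qed.

Lemma Mmat_sqrt_degW : M *m s = (rhoA + rhoB) *: s.
Proof.
have Dinv_s : Dinvhalf e pi *m s = const_mx 1.
  by apply/matrixP => x j; rewrite mul_diag_mx !mxE mulVf ?sqrt_degW_neq0.
rewrite Mmat_mulmx Dinv_s scalerDl; congr (_ + _ *: _).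
apply/matrixP => x j; rewrite mul_diag_mx !mxE (eq_bigr (W x)) => [|y _]; last first.
  by rewrite [const_mx 1 y j]mxE mulr1.
by rewrite -/(d x) -{2}(sqr_sqrtr (ltW (deg_gt0 x))) expr2 mulKf ?sqrt_degW_neq0.
Qed.

Lemma Dinvhalf_mulmxE (u : 'cV[R]_c) x :
  (Dinvhalf e pi *m u) x 0 = (Num.sqrt (d x))^-1 * u x 0.
Proof. by rewrite mul_diag_mx !mxE. Qed.

Lemma Dinvhalf_mulmx_neq0 (v : 'cV[R]_c) : v != 0 -> Dinvhalf e pi *m v != 0.
Proof.
by apply: contra_neq => h0; rewrite -[v]mul1mx -Dhalf_Dinvhalf -mulmxA h0 mulmx0.
Qed.

Lemma Mmat_eigvecP (v : 'cV[R]_c) mu : M *m v = mu *: v -> forall x,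
  (mu - rhoA) * d x * (Dinvhalf e pi *m v) x 0 = rhoB * (W *m (Dinvhalf e pi *m v)) x 0.
Proof.
move=> Mv x; set h := Dinvhalf e pi *m v; have t_neq0 := sqrt_degW_neq0 x.
have vx : v x 0 = Num.sqrt (d x) * h x 0.
  by rewrite Dinvhalf_mulmxE mulrA divff ?mul1r.
have := congr1 (fun A : 'cV[R]_c => A x 0) Mv; rewrite Mmat_mulmx -/h /=.
rewrite [(_ + _ : 'cV_c) x 0]mxE ![(_ *: _ : 'cV_c) _ 0]mxE Dinvhalf_mulmxE vx => eq_x.
have -> : (mu - rhoA) * d x * h x 0 = Num.sqrt (d x) *
    (mu * (Num.sqrt (d x) * h x 0) - rhoA * (Num.sqrt (d x) * h x 0)).
  by rewrite -{1}(sqr_sqrtr (ltW (deg_gt0 x))); ring.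
by rewrite -eq_x addrAC subrr add0r; field.
Qed.

Lemma Mmat_eigenvalue_bound (v : 'cV[R]_c) mu :
  0 <= rhoB -> v != 0 -> M *m v = mu *: v -> `|mu - rhoA| <= rhoB.
Proof.
move=> rhoB_ge0 v_neq0 Mv; set h := Dinvhalf e pi *m v.
have [x0 [hx0 max_x0]] := cV_norm_argmax (Dinvhalf_mulmx_neq0 v_neq0).
have dh_gt0 : 0 < d x0 * `|h x0 0| by rewrite mulr_gt0 ?normr_gt0.
rewrite -(ler_pM2r dh_gt0).
have -> : `|mu - rhoA| * (d x0 * `|h x0 0|) = `|(mu - rhoA) * d x0 * h x0 0|.
  by rewrite !normrM (ger0_norm (ltW (deg_gt0 x0))) mulrA.
rewrite Mmat_eigvecP // normrM ger0_norm // ler_wpM2l //.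
rewrite mxE (le_trans (ler_norm_sum _ _ _)) // /degW big_distrl /=.
by apply: ler_sum => y _; rewrite normrM ger0_norm ?ler_wpM2l.
Qed.

Lemma Mmat_perron (v : 'cV[R]_c) mu :
  v != 0 -> M *m v = mu *: v -> rhoA + rhoB <= `|mu| -> exists a, v = a *: s.
Proof.
move=> v_neq0 Mv mu_ge; set h := Dinvhalf e pi *m v.
have mu_eq : mu = rhoA + rhoB.
  exact: eq_of_norm_ge_dist_le rhoA_gt0 mu_ge (Mmat_eigenvalue_bound (ltW rhoB_gt0) v_neq0 Mv).
have h_harm x : \sum_y W x y * h y 0 = d x * h x 0.
  apply: (mulfI (lt0r_neq0 rhoB_gt0)); move: (Mmat_eigvecP Mv x).
  by rewrite -/h mu_eq addrAC subrr add0r -mulrA => ->; rewrite [(W *m h) x 0]mxE.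
have [x0 [_ max_x0]] := cV_norm_argmax (Dinvhalf_mulmx_neq0 v_neq0).
have h_const := harmonic_normmax_eq W_ge0 (rwW_gt0 pi_gt0) h_harm (e_conn x0) max_x0.
exists (h x0 0); apply/matrixP => x j; rewrite [j]ord1 -(h_const x) Dinvhalf_mulmxE !mxE.
by rewrite mulrAC mulVf ?mul1r ?sqrt_degW_neq0.
Qed.

Lemma Zprime_Dhalf n rhoO rhoT (alpha : 'cV[R]_c) (v1 : 'cV[R]_n) (Z : 'M[R]_(n, c)) :
  Zprime e pi rhoA rhoB rhoO rhoT alpha v1 Z *m Dhalf e pi =
  Z *m Dhalf e pi *m M + (rhoO *: (Z *m alpha) + rhoT *: v1) *m s^T.
Proof.
have -> : Z *m Dhalf e pi *m M =
    rhoA *: (Z *m Dhalf e pi) + rhoB *: (Z *m W *m Dinvhalf e pi).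
  rewrite mulmxDr mul_mx_scalar -scalemxAr !mulmxA -(mulmxA Z (Dhalf e pi)).
  by rewrite Dhalf_Dinvhalf mulmx1.
apply/matrixP => i x; rewrite !mul_mx_diag !mxE big_ord1 !mxE.
rewrite [X in rhoB / _ * X](eq_bigr (fun y => Z i y * W y x)) => [|y _]; last first.
  by rewrite rwW_sym // mulrC.
rewrite [X in rhoO * X](eq_bigr (fun y => Z i y * alpha y 0)) => [|y _]; last exact: mulrC.
rewrite -{1}(sqr_sqrtr (ltW (deg_gt0 x))); field; exact: sqrt_degW_neq0.
Qed.

Lemma Zprime_Dhalf_eigcols n rhoO rhoT (alpha : 'cV[R]_c) (v1 : 'cV[R]_n)
    (Z : 'M[R]_(n, c)) m (X : 'M[R]_(c, m)) (mu : 'rV[R]_m) :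
  s^T *m X = 0 -> M *m X = X *m diag_mx mu ->
  Zprime e pi rhoA rhoB rhoO rhoT alpha v1 Z *m Dhalf e pi *m X =
  Z *m Dhalf e pi *m X *m diag_mx mu.
Proof. by move=> sX MX; rewrite Zprime_Dhalf mulmxDl -!mulmxA sX mulmx0 addr0 MX. Qed.

End NormalizedAdjacency.

Theorem corollary3 (R : rcfType) (c : nat) (e : rel 'I_c) (pi : 'I_c -> R)
  (Hgraph : connected_simple_graph e)
  (Hstat : rw_stationary e pi)
  (Hpipos : forall x, 0 < pi x)
  (rhoA rhoB rhoO rhoT : R)
  (HrhoA : 0 < rhoA) (HrhoB : 0 < rhoB) (HrhoO : 0 < rhoO) (HrhoT : 0 < rhoT)
  (alpha : 'cV[R]_c) (n : nat) (v1 : 'cV[R]_n) (Z : 'M[R]_(n, c))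
  (q : nat) (Hq2 : (2 <= q)%N) (Hqc : (q < c)%N)
  (lam : nat -> R)
  (f : 'cV[R]_c) (X : 'M[R]_(c, q.-1)) (Y : 'M[R]_(c, c - q))
  (Hord : forall i j : nat, (1 <= i)%N -> (i <= j)%N -> (j <= c)%N ->
            `|lam j| <= `|lam i|)
  (Horth : (row_mx f (row_mx X Y))^T *m row_mx f (row_mx X Y) = 1%:M)
  (Heig : Mmat e pi rhoA rhoB =
          row_mx f (row_mx X Y) *m diag_eigs _ lam *m (row_mx f (row_mx X Y))^T)
  (Hlam : lam q.+1 != 0)
  (HX : frob (Z *m Dhalf e pi *m X) != 0)
  (HY : frob (Z *m Dhalf e pi *m Y) != 0) :
  let Z' := Zprime e pi rhoA rhoB rhoO rhoT alpha v1 Z in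
  let deltaM := `|lam q / lam q.+1| in
  deltaM * (frob (Z' *m Dhalf e pi *m Y) / frob (Z *m Dhalf e pi *m Y))
    <= frob (Z' *m Dhalf e pi *m X) / frob (Z *m Dhalf e pi *m X).
Proof.
cbv zeta; have [e_sym [_ e_conn]] := Hgraph.
have c_gt1 : (1 < c)%N by rewrite ltnW // (leq_ltn_trans Hq2 Hqc).
have deg_gt0 := degW_gt0 Hpipos (connected_has_neighbor c_gt1 e_conn).
set s := sqrt_degW e pi.
have Qs : (row_mx X Y)^T *m s = 0.
  apply: (eigbasis_perp_perron Horth Heig _ (Mmat_sqrt_degW rhoA rhoB deg_gt0)).
  - by rewrite addr_ge0 ?ltW.
  - by move=> j; apply: Hord => //; have := ltn_ord j; lia.
  - by move=> v mu; apply: Mmat_perron.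
have [sX sY] : s^T *m X = 0 /\ s^T *m Y = 0.
  apply/eq_row_mx; rewrite -mul_mx_row row_mx0 -[LHS]trmxK trmx_mul trmxK Qs.
  exact: trmx0.
have [_] := eigbasis_mulmx Horth Heig.
rewrite (row_nat_split _ _ (fun i => lam i.+2)) => /eigcols_row_mx[MX MY].
rewrite (Zprime_Dhalf_eigcols deg_gt0 e_sym _ _ _ _ _ sX MX).
rewrite (Zprime_Dhalf_eigcols deg_gt0 e_sym _ _ _ _ _ sY MY).
set A := Z *m Dhalf e pi *m X; set B := Z *m Dhalf e pi *m Y.
have A_gt0 : 0 < frob A by rewrite lt0r HX sqrtr_ge0.
have B_gt0 : 0 < frob B by rewrite lt0r HY sqrtr_ge0.
have lowX : `|lam q| * frob A <= frob (A *m diag_mx (\row_j lam j.+2)).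
  by apply: frob_mulmx_diag_ge => j; rewrite mxE; apply: Hord => //; have := ltn_ord j; lia.
have upY : frob (B *m diag_mx (\row_j lam (q.-1 + j).+2)) <= `|lam q.+1| * frob B.
  by apply: frob_mulmx_diag_le => j; rewrite mxE; apply: Hord => //; have := ltn_ord j; lia.
have lam_gt0 : 0 < `|lam q.+1| by rewrite normr_gt0.
rewrite normrM normrV ?unitfE // mulrAC ler_pdivlMr // (le_trans _ lowX) //.
rewrite ler_pM2r // -mulrA ler_piMr // ler_pdivrMr // mul1r ler_pdivrMr //.
Qed.
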